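(* Let $K$ be a commutative ring with $1$, let $A$ be a $K$-algebra (associative, not necessarily commutative or with $1$), and let $B$ be a $K$-subalgebra of $A$ such that $A/B$ is a finitely presented $K$-module. Then $A$ is finitely generated as a $K$-algebra if and only if $B$ is finitely generated as a $K$-algebra.
   Context: A $K$-algebra is a structure that is simultaneously an associative ring (not necessarily with identity) and a $K$-module, with $K$-bilinear multiplication. It is finitely generated as a $K$-algebra if there is a finite subset $U$ such that the smallest $K$-subalgebra containing $U$ is the whole algebra. *)

From HB Require Import structures.
From mathcomp Require Import all_boot all_order all_algebra.
Set Implicit Arguments. Unset Strict Implicit. Unset Printing Implicit Defensive.
Import GRing.Theory.
Local Open Scope ring_scope.

Section Defs.
Variables (K : comPzRingType) (A : lmodType K).

Definition is_Kalgebra (mul : A -> A -> A) : Prop :=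
  [/\ (forall x y z, mul x (mul y z) = mul (mul x y) z),
      (forall x y z, mul (x + y) z = mul x z + mul y z),
      (forall x y z, mul x (y + z) = mul x y + mul x z),
      (forall k x y, mul (k *: x) y = k *: mul x y) &
      (forall k x y, mul x (k *: y) = k *: mul x y)].

Definition is_subalg (mul : A -> A -> A) (S : A -> Prop) : Prop :=
  [/\ S 0,
      (forall x y, S x -> S y -> S (x + y)),
      (forall (k : K) x, S x -> S (k *: x)) &
      (forall x y, S x -> S y -> S (mul x y))].

Definition gen_subalg (mul : A -> A -> A) (U : seq A) : A -> Prop :=
  fun x => forall S, is_subalg mul S -> (forall u, u \in U -> S u) -> S x.

Definition fg_subalg (mul : A -> A -> A) (S : A -> Prop) : Prop :=
  exists U : seq A, (forall u, u \in U -> S u) /\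
    (forall x, gen_subalg mul U x <-> S x).

Definition fg_alg (mul : A -> A -> A) : Prop := fg_subalg mul (fun _ => True).

(* The quotient K-module A/B (B a submodule) is finitely presented:
   there is a surjection K^n -> A/B, e_i |-> a_i + B, whose kernel
   { c | sum_i c_i a_i \in B } is a finitely generated K-submodule of K^n
   (generated by the relation vectors r_1, ..., r_m). *)
Definition quot_fin_pres (B : A -> Prop) : Prop :=
  exists (n : nat) (a : 'I_n -> A),
    (forall x : A, exists c : 'I_n -> K, B (x - \sum_(i < n) c i *: a i)) /\
    exists (m : nat) (r : 'I_m -> 'I_n -> K),
      (forall j, B (\sum_(i < n) r j i *: a i)) /\
      (forall c : 'I_n -> K, B (\sum_(i < n) c i *: a i) ->
         exists d : 'I_m -> K, forall i, c i = \sum_(j < m) d j * r j i).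
End Defs.

(* Write A = B + V with V spanned by a_1, ..., a_n; finite presentation of A/B
   then says that B ∩ V is spanned by finitely many s_1, ..., s_m.  If B is
   generated by Y, then A is generated by Y and the a_i.  Conversely, let A be
   generated by X, put U = X ∪ {a_i}, and split every x as b(x) + v with
   b(x) in B and v in V.  Let C ⊆ B be the subalgebra generated by the s_j and
   the b(w) for all products w of at most three elements of U.  Then C + V
   contains U and is closed under multiplication, so C + V = A, and hence
   B = C + (B ∩ V) = C. *)

From mathcomp Require Import all_boot all_order all_algebra.
From Stdlib Require Import IndefiniteDescription.
Set Implicit Arguments. Unset Strict Implicit. Unset Printing Implicit Defensive.
Import GRing.Theory.
Local Open Scope ring_scope.

Section Submodules.
Variables (K : comPzRingType) (A : lmodType K).

Definition is_submod (P : A -> Prop) : Prop :=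
  [/\ P 0, (forall x y, P x -> P y -> P (x + y)) & (forall (k : K) x, P x -> P (k *: x))].

Definition lspan n (a : 'I_n -> A) (x : A) : Prop :=
  exists k : 'I_n -> K, x = \sum_(i < n) k i *: a i.

Definition add_pred (P Q : A -> Prop) (x : A) : Prop := exists p, P p /\ Q (x - p).

Section SubmodTheory.
Variables (P : A -> Prop) (subP : is_submod P).

Lemma submod0 : P 0. Proof. by case: subP. Qed.

Lemma submodD x y : P x -> P y -> P (x + y). Proof. by case: subP => _ + _; apply. Qed.

Lemma submodZ k x : P x -> P (k *: x). Proof. by case: subP => _ _; apply. Qed.

Lemma submodB x y : P x -> P y -> P (x - y).
Proof. by move=> Px Py; rewrite -scaleN1r; apply/submodD/submodZ. Qed.

Lemma submod_sum n (k : 'I_n -> K) (f : 'I_n -> A) :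
  (forall i, P (f i)) -> P (\sum_(i < n) k i *: f i).
Proof.
move=> Pf; elim/big_ind: _ => [|x y|i _]; [exact: submod0|exact: submodD|exact/submodZ].
Qed.

Lemma lspan_sub n (a : 'I_n -> A) x : (forall i, P (a i)) -> lspan a x -> P x.
Proof. by move=> Pa [k ->]; exact: submod_sum. Qed.

End SubmodTheory.

Lemma lspan_mem n (a : 'I_n -> A) i : lspan a (a i).
Proof.
exists (fun j => (j == i)%:R); rewrite (bigD1 i) //= eqxx scale1r big1 ?addr0 //.
by move=> j /negbTE ->; rewrite scale0r.
Qed.

Lemma lspan_submod n (a : 'I_n -> A) : is_submod (lspan a).
Proof.
split.
- by exists (fun=> 0); rewrite big1 // => i _; rewrite scale0r.
- move=> _ _ [k ->] [k' ->]; exists (fun i => k i + k' i).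
  by rewrite -big_split; apply: eq_bigr => i _; rewrite scalerDl.
- move=> c _ [k ->]; exists (fun i => c * k i).
  by rewrite scaler_sumr; apply: eq_bigr => i _; rewrite scalerA.
Qed.

Lemma add_pred_submod P Q : is_submod P -> is_submod Q -> is_submod (add_pred P Q).
Proof.
move=> subP subQ; split.
- by exists 0; rewrite subr0; split; apply: submod0.
- move=> x y [p [Pp Qx]] [q [Pq Qy]]; exists (p + q); split; first exact: submodD.
  by rewrite opprD addrACA; apply: submodD.
- move=> k x [p [Pp Qx]]; exists (k *: p); split; first exact: submodZ.
  by rewrite -scalerBr; apply: submodZ.
Qed.

Lemma add_pred_l P Q x : is_submod Q -> P x -> add_pred P Q x.
Proof. by move=> subQ Px; exists x; rewrite subrr; split; last exact: submod0. Qed.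

Lemma sumZ_exchange n m (d : 'I_m -> K) (r : 'I_m -> 'I_n -> K) (a : 'I_n -> A) :
  \sum_(i < n) (\sum_(j < m) d j * r j i) *: a i =
  \sum_(j < m) d j *: \sum_(i < n) r j i *: a i.
Proof.
under eq_bigr do rewrite scaler_suml.
rewrite exchange_big /=; apply: eq_bigr => j _; rewrite scaler_sumr.
by apply: eq_bigr => i _; rewrite scalerA.
Qed.

End Submodules.

Section Algebra.
Variables (K : comPzRingType) (A : lmodType K) (mul : A -> A -> A).
Hypothesis mul_alg : is_Kalgebra mul.

Lemma mulmA x y z : mul x (mul y z) = mul (mul x y) z. Proof. by case: mul_alg. Qed.
Lemma mulmDl x y z : mul (x + y) z = mul x z + mul y z. Proof. by case: mul_alg. Qed.
Lemma mulmDr x y z : mul x (y + z) = mul x y + mul x z. Proof. by case: mul_alg. Qed.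
Lemma mulmZl k x y : mul (k *: x) y = k *: mul x y. Proof. by case: mul_alg. Qed.
Lemma mulmZr k x y : mul x (k *: y) = k *: mul x y. Proof. by case: mul_alg. Qed.

Lemma mul0m y : mul 0 y = 0. Proof. by have := mulmZl 0 0 y; rewrite !scale0r. Qed.
Lemma mulm0 x : mul x 0 = 0. Proof. by have := mulmZr 0 x 0; rewrite !scale0r. Qed.

Lemma mulmBl x y z : mul (x - y) z = mul x z - mul y z.
Proof. by rewrite mulmDl -scaleN1r mulmZl scaleN1r. Qed.

Lemma mulmBr x y z : mul x (y - z) = mul x y - mul x z.
Proof. by rewrite mulmDr -scaleN1r mulmZr scaleN1r. Qed.

Lemma mulm_suml n (k : 'I_n -> K) (a : 'I_n -> A) y :
  mul (\sum_(i < n) k i *: a i) y = \sum_(i < n) k i *: mul (a i) y.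
Proof.
rewrite (big_morph (mul^~ y) (fun x x' => mulmDl x x' y) (mul0m y)).
by apply: eq_bigr => i _; rewrite mulmZl.
Qed.

Lemma mulm_sumr n (k : 'I_n -> K) (a : 'I_n -> A) x :
  mul x (\sum_(i < n) k i *: a i) = \sum_(i < n) k i *: mul x (a i).
Proof.
rewrite (big_morph (mul x) (mulmDr x) (mulm0 x)).
by apply: eq_bigr => i _; rewrite mulmZr.
Qed.

Lemma subalg_submod S : is_subalg mul S -> is_submod S.
Proof. by case. Qed.

Lemma submod_subalg S :
  is_submod S -> (forall x y, S x -> S y -> S (mul x y)) -> is_subalg mul S.
Proof. by case. Qed.

Lemma subalgM S x y : is_subalg mul S -> S x -> S y -> S (mul x y).
Proof. by case=> _ _ _; apply. Qed.

Lemma lspan_mull P n (a : 'I_n -> A) v y :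
  is_submod P -> (forall i, P (mul (a i) y)) -> lspan a v -> P (mul v y).
Proof. by move=> subP Pa [k ->]; rewrite mulm_suml; exact: submod_sum. Qed.

Lemma lspan_mulr P n (a : 'I_n -> A) x v :
  is_submod P -> (forall i, P (mul x (a i))) -> lspan a v -> P (mul x v).
Proof. by move=> subP Pa [k ->]; rewrite mulm_sumr; exact: submod_sum. Qed.

Lemma gen_subalg_subalg U : is_subalg mul (gen_subalg mul U).
Proof.
split=> [S [] //|x y Sx Sy S subS SU|k x Sx S subS SU|x y Sx Sy S subS SU].
- by apply: (submodD (subalg_submod subS)); [apply: Sx|apply: Sy].
- by apply: (submodZ (subalg_submod subS)); apply: Sx.
- by apply: (subalgM subS); [apply: Sx|apply: Sy].
Qed.

Lemma gen_subalg_mem U u : u \in U -> gen_subalg mul U u.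
Proof. by move=> Uu S _; apply. Qed.

Lemma fg_alg_of_fg_subalg B n (a : 'I_n -> A) :
  (forall x, add_pred B (lspan a) x) -> fg_subalg mul B -> fg_alg mul.
Proof.
move=> coverB [Y [_ genY]]; exists (Y ++ map a (enum 'I_n)); split=> // x.
split=> // _ S subS SU; have [b [Bb Vxb]] := coverB x; rewrite -(subrK b x).
apply: (submodD (subalg_submod subS)).
- apply: (lspan_sub (subalg_submod subS)) Vxb => i.
  by apply: SU; rewrite mem_cat map_f ?orbT ?mem_enum.
- by apply: (genY b).2 => // u Yu; apply: SU; rewrite mem_cat Yu.
Qed.

Section FgSubalgOfFgAlg.
Variables (B : A -> Prop) (n m : nat) (a : 'I_n -> A) (s : 'I_m -> A).
Variables (bpart : A -> A) (X : seq A).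
Hypotheses (subalgB : is_subalg mul B)
  (bpartP : forall x, B (bpart x) /\ lspan a (x - bpart x))
  (cap_lspan : forall v, B v /\ lspan a v <-> lspan s v)
  (genX : forall x, gen_subalg mul X x).

Let U := X ++ map a (enum 'I_n).
Let U2 := [seq mul u v | u <- U, v <- U].
Let U3 := [seq mul w u | w <- U2, u <- U].
Let W := U ++ U2 ++ U3.
Let gens := map bpart W ++ map s (enum 'I_m).
Let C := gen_subalg mul gens.
Let N := add_pred C (lspan a).

Let a_in_U i : a i \in U.
Proof. by rewrite mem_cat map_f ?orbT ?mem_enum. Qed.

Let C_subalg : is_subalg mul C. Proof. exact: gen_subalg_subalg. Qed.
Let C_submod : is_submod C. Proof. exact: subalg_submod. Qed.
Let N_submod : is_submod N. Proof. exact/add_pred_submod/lspan_submod. Qed.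

Let gens_B g : g \in gens -> B g.
Proof.
rewrite mem_cat => /orP[/mapP[w _ ->]|/mapP[j _ ->]]; first exact: (bpartP w).1.
exact: ((cap_lspan (s j)).2 (lspan_mem s j)).1.
Qed.

Let C_N x : C x -> N x. Proof. exact: add_pred_l (lspan_submod a). Qed.

Let X_W u : u \in X -> u \in W.
Proof. by move=> Xu; rewrite !mem_cat Xu. Qed.

Let W_U2 u v : u \in U -> v \in U -> mul u v \in W.
Proof. by move=> Uu Uv; rewrite mem_cat; apply/orP; right; rewrite mem_cat allpairs_f. Qed.

Let W_U3 u v w : u \in U -> v \in U -> w \in U -> mul (mul u v) w \in W.
Proof.
move=> Uu Uv Uw; rewrite mem_cat; apply/orP; right; rewrite mem_cat; apply/orP; right.
by apply: allpairs_f => //; apply: allpairs_f.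
Qed.

Let N_bpart w : w \in W -> N w.
Proof.
move=> Ww; exists (bpart w); split; last exact: (bpartP w).2.
by apply: gen_subalg_mem; rewrite mem_cat map_f.
Qed.

Let N_U2 u v : u \in U -> v \in U -> N (mul u v).
Proof. by move=> Uu Uv; apply/N_bpart/W_U2. Qed.

Let N_U3 u v w : u \in U -> v \in U -> w \in U -> N (mul (mul u v) w).
Proof. by move=> Uu Uv Uw; apply/N_bpart/W_U3. Qed.

Let N_mul_bpartl w y :
  N (mul w y) -> (forall i, N (mul (a i) y)) -> N (mul (bpart w) y).
Proof.
move=> Nwy Nay; rewrite -(subKr w (bpart w)) mulmBl.
exact/(submodB N_submod)/(lspan_mull N_submod Nay (bpartP w).2).
Qed.

Let N_mul_bpartr x w :
  N (mul x w) -> (forall i, N (mul x (a i))) -> N (mul x (bpart w)).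
Proof.
move=> Nxw Nxa; rewrite -(subKr w (bpart w)) mulmBr.
exact/(submodB N_submod)/(lspan_mulr N_submod Nxa (bpartP w).2).
Qed.

(* Products of four elements of U need not have their B-component in C, but
   splitting them as a product of two products of two puts them in N. *)
Let N_U4 u1 u2 u3 u4 : u1 \in U -> u2 \in U -> u3 \in U -> u4 \in U ->
  N (mul (mul u1 u2) (mul u3 u4)).
Proof.
move=> Uu1 Uu2 Uu3 Uu4; set p := mul u1 u2; set q := mul u3 u4.
rewrite -(subrK (bpart p) p) mulmDl; apply: (submodD N_submod).
  apply: (lspan_mull N_submod) (bpartP p).2 => i.
  by rewrite /q mulmA; apply: N_U3.
rewrite -(subrK (bpart q) q) mulmDr; apply: (submodD N_submod).
  apply: (lspan_mulr N_submod) (bpartP q).2 => j.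
  by apply: N_mul_bpartl => [|i]; [apply: N_U3|apply: N_U2].
by apply: C_N; apply: (subalgM C_subalg); apply: gen_subalg_mem; rewrite mem_cat map_f ?W_U2.
Qed.

Let N_mulU u w : u \in U -> w \in W -> N (mul u w) /\ N (mul w u).
Proof.
move=> Uu; rewrite mem_cat => /orP[Uw|]; last rewrite mem_cat =>
  /orP[/allpairsP[[v1 v2] [/= V1 V2 ->]]|
       /allpairsP[[w' v3] [/= /allpairsP[[v1 v2] [/= V1 V2 ->]] V3 ->]]].
- by split; apply: N_U2.
- by split; [rewrite mulmA|]; apply: N_U3.
- by split; [rewrite -mulmA mulmA|rewrite -mulmA]; apply: N_U4.
Qed.

(* The elements of C that V multiplies into N on both sides form a subalgebra
   containing the generators, hence all of C. *)
Let E c := C c /\ forall i, N (mul (a i) c) /\ N (mul c (a i)).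

Let N_mulE z y : N z -> E y -> N (mul z y).
Proof.
move=> [c [Cc Vzc]] [Cy Ey]; rewrite -(subrK c z) mulmDl.
apply: (submodD N_submod); first by apply: (lspan_mull N_submod) Vzc => i; exact: (Ey i).1.
by apply: C_N; apply: (subalgM C_subalg).
Qed.

Let E_mulN x z : E x -> N z -> N (mul x z).
Proof.
move=> [Cx Ex] [c [Cc Vzc]]; rewrite -(subrK c z) mulmDr.
apply: (submodD N_submod); first by apply: (lspan_mulr N_submod) Vzc => i; exact: (Ex i).2.
by apply: C_N; apply: (subalgM C_subalg).
Qed.

Let E_subalg : is_subalg mul E.
Proof.
split.
- split=> [|i]; first exact: (submod0 C_submod).
  by rewrite mulm0 mul0m; split; apply: (submod0 N_submod).
- move=> x y [Cx Ex] [Cy Ey]; split=> [|i]; first exact: (submodD C_submod).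
  have [[Nax Nxa] [Nay Nya]] := (Ex i, Ey i).
  by rewrite mulmDr mulmDl; split; apply: (submodD N_submod).
- move=> k x [Cx Ex]; split=> [|i]; first exact: (submodZ C_submod).
  have [Nax Nxa] := Ex i.
  by rewrite mulmZr mulmZl; split; apply: (submodZ N_submod).
- move=> x y Ex Ey; split=> [|i]; first exact: (subalgM C_subalg) Ex.1 Ey.1.
  split; first by rewrite mulmA; apply: N_mulE (Ex.2 i).1 Ey.
  by rewrite -mulmA; apply: E_mulN Ex (Ey.2 i).2.
Qed.

Let E_gens g : g \in gens -> E g.
Proof.
move=> gg; split=> [|i]; first exact: gen_subalg_mem.
move: gg; rewrite mem_cat => /orP[/mapP[w Ww ->]|/mapP[j _ ->]].
  have [Naw Nwa] := N_mulU (a_in_U i) Ww.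
  by split; [apply: N_mul_bpartr|apply: N_mul_bpartl] => // k; apply: N_U2.
have Vs := ((cap_lspan (s j)).2 (lspan_mem s j)).2.
by split; [apply: (lspan_mulr N_submod) Vs|apply: (lspan_mull N_submod) Vs] => k; apply: N_U2.
Qed.

Let C_E c : C c -> E c. Proof. by move=> Cc; apply: Cc E_subalg E_gens. Qed.

Let N_subalg : is_subalg mul N.
Proof.
apply: (submod_subalg N_submod) => z z' [c [Cc Vzc]] Nz'.
rewrite -(subrK c z) mulmDl; apply: (submodD N_submod); last exact: E_mulN (C_E Cc) Nz'.
apply: (lspan_mull N_submod) Vzc => i.
move: Nz' => [c' [Cc' Vzc']]; rewrite -(subrK c' z') mulmDr; apply: (submodD N_submod).
  by apply: (lspan_mulr N_submod) Vzc' => j; apply: N_U2.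
exact: ((C_E Cc').2 i).1.
Qed.

Let B_C x : B x -> C x.
Proof.
move=> Bx; have [c [Cc Vxc]] : N x.
  by apply: genX N_subalg _ => u Xu; apply/N_bpart/X_W.
have Bc : B c := Cc B subalgB gens_B.
have Sxc : lspan s (x - c).
  by apply/cap_lspan; split=> //; exact: (submodB (subalg_submod subalgB)).
rewrite -(subrK c x); apply: (submodD C_submod) Cc.
apply: (lspan_sub C_submod) Sxc => j.
by apply: gen_subalg_mem; rewrite mem_cat map_f ?orbT ?mem_enum.
Qed.

Lemma fg_subalg_of_fg_alg : fg_subalg mul B.
Proof.
exists gens; split=> [|x]; first exact: gens_B.
by split=> [Cx|]; [apply: Cx|exact: B_C].
Qed.

End FgSubalgOfFgAlg.

Lemma fg_alg_iff_fg_subalg B n m (a : 'I_n -> A) (s : 'I_m -> A) :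
  is_subalg mul B -> (forall x, add_pred B (lspan a) x) ->
  (forall v, B v /\ lspan a v <-> lspan s v) ->
  fg_alg mul <-> fg_subalg mul B.
Proof.
move=> subalgB coverB cap_lspan; split; last exact: fg_alg_of_fg_subalg coverB.
move=> [X [_ genX]]; have [bpart bpartP] :=
  functional_choice (fun x b => B b /\ lspan a (x - b)) coverB.
by apply: fg_subalg_of_fg_alg subalgB bpartP cap_lspan (fun x => (genX x).2 I).
Qed.

End Algebra.

Lemma quot_fin_presP (K : comPzRingType) (A : lmodType K) (B : A -> Prop) :
  is_submod B -> quot_fin_pres B ->
  exists n m (a : 'I_n -> A) (s : 'I_m -> A),
    (forall x, add_pred B (lspan a) x) /\ (forall v, B v /\ lspan a v <-> lspan s v).
Proof.
move=> subB [n [a [dec [m [r [Br rel]]]]]].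
exists n, m, a, (fun j => \sum_(i < n) r j i *: a i); split.
  move=> x; have [c Bc] := dec x; exists (x - \sum_(i < n) c i *: a i).
  by split=> //; rewrite subKr; exists c.
move=> v; split=> [[Bv [k vk]]|[d ->]].
  rewrite vk in Bv *; have [d kd] := rel k Bv; exists d.
  by rewrite -sumZ_exchange; apply: eq_bigr => i _; rewrite kd.
split; first exact: submod_sum.
by exists (fun i => \sum_(j < m) d j * r j i); rewrite sumZ_exchange.
Qed.

Theorem theorem1p5 (K : comPzRingType) (A : lmodType K) (mul : A -> A -> A)
  (B : A -> Prop) :
  is_Kalgebra mul -> is_subalg mul B -> quot_fin_pres B ->
  (fg_alg mul <-> fg_subalg mul B).
Proof.
move=> mul_alg subalgB finpres.
have [n [m [a [s [coverB cap_lspan]]]]] := quot_fin_presP (subalg_submod subalgB) finpres.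
exact: fg_alg_iff_fg_subalg coverB cap_lspan.
Qed.
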